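(* Consider any AS graph (with its customer–provider and peer–peer labels), any destination AS $d$, any set $S\subseteq V$ of secure ASes (partial deployment allowed), and any fixed deterministic tie-break rules, and suppose all secure ASes use the same one of the three S*BGP routing models (security first, security second, or security third). Then the routing system has a unique stable routing state, and S*BGP route-selection dynamics are guaranteed to converge to this stable routing state. This holds in each of the three S*BGP routing models.
   Context: An AS graph is an undirected graph $G=(V,E)$ whose vertices are autonomous systems (ASes); every edge is labeled either customer–provider (one endpoint is the customer, the other its provider) or peer–peer. Routing to a fixed destination $d\in V$ is considered. The destination $d$ announces the route ''$d$'' to its neighbors. Every other AS $s$ selects at most one route to $d$ (a simple AS-level path from $s$ to $d$) among the routes announced to it by its neighbors, and announces the selected route (prepended with itself) according to the export policy (Ex): if the route's next hop is a customer of $s$, it is announced to all neighbors; otherwise only to $s$'s customers. A route at $s$ is a customer/peer/provider route if its next hop is a customer/peer/provider of $s$; its length is its number of hops. An insecure AS ranks available routes by: (LP) customer routes over peer routes over provider routes; then (SP) shorter over longer; then (TB) a fixed AS-specific deterministic tie-break. A set $S\subseteq V$ of ASes is secure; a route is secure iff every AS on it is in $S$ (such routes are learned via S*BGP), otherwise insecure. Each secure AS additionally applies the rule (SecP): prefer a secure route over an insecure route. In the security-first model SecP is applied before LP; in the security-second model between LP and SP; in the security-third model between SP and TB. Routing dynamics: ASes repeatedly (asynchronously) re-run their route selection on the routes currently announced to them and re-announce per Ex. A routing state (the route chosen by each AS $s\ne d$) is stable if no AS that re-runs its route selection changes its route. *)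

From mathcomp Require Import all_boot.
Set Implicit Arguments. Unset Strict Implicit. Unset Printing Implicit Defensive.

(* An AS graph on a finite vertex type V is given by two boolean relations:
   cust u v  <=>  u is a customer of v (i.e. v is a provider of u);
   peer u v  <=>  u and v are peers. *)

Section ASGraph.
Variable V : finType.
Variables (cust peer : rel V).

Definition wf_as_graph : Prop :=
  [/\ forall u, ~~ cust u u,
      forall u, ~~ peer u u,
      forall u v, peer u v = peer v u,
      forall u v, ~~ (cust u v && cust v u)
    & forall u v, ~~ (peer u v && (cust u v || cust v u))].

Definition no_cp_cycle : Prop :=
  forall (x : V) (p : seq V), path cust x p -> last x p = x -> p = [::].

Definition nbr (u v : V) : bool := [|| cust u v, cust v u | peer u v].

Definition is_route (d s : V) (r : seq V) : bool :=
  match r with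
  | [::] => false
  | x :: p => [&& x == s, path nbr x p, last x p == d & uniq r]
  end.

End ASGraph.

Inductive secmodel := SecFirst | SecSecond | SecThird.

Fixpoint lexlt (a b : seq nat) : bool :=
  match a, b with
  | x :: a', y :: b' => (x < y) || ((x == y) && lexlt a' b')
  | _, _ => false
  end.

Definition strict_total (T : eqType) (R : rel T) : Prop :=
  [/\ forall x, ~~ R x x,
      forall x y z, R x y -> R y z -> R x z
    & forall x y, x != y -> R x y || R y x].

Section Routing.
Variable V : finType.
Variables (cust peer : rel V) (d : V) (S : {set V}) (m : secmodel)
          (tb : V -> rel (seq V)).

(* A routing state: the route currently selected by each AS (None = no route).
   The value at d is irrelevant: d always "has" the route [:: d]. *)
Definition rstate := V -> option (seq V).

Definition cur (st : rstate) (n : V) : option (seq V) :=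
  if n == d then Some [:: d] else st n.

Definition exports (n : V) (r : seq V) (s : V) : bool :=
  [|| n == d,
      (match r with _ :: h :: _ => cust h n | _ => false end)
    | cust s n].

Definition offer (st : rstate) (s n : V) : option (seq V) :=
  if nbr cust peer s n then
    match cur st n with
    | Some r => if (s \notin r) && exports n r s then Some (s :: r) else None
    | None => None
    end
  else None.

Definition avail (st : rstate) (s : V) : seq (seq V) :=
  pmap (offer st s) (enum V).

(* LP class of a route at s: 0 customer, 1 peer, 2 provider route. *)
Definition lp_class (s : V) (r : seq V) : nat :=
  match r with
  | _ :: h :: _ => if cust h s then 0 else if peer s h then 1 else 2
  | _ => 3
  end.

Definition route_len (r : seq V) : nat := (size r).-1.

Definition insec (r : seq V) : nat := ~~ all (mem S) r.

(* Ranking keys (smaller is better), in order of application. *)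
Definition keys (s : V) (r : seq V) : seq nat :=
  if s \in S then
    match m with
    | SecFirst  => [:: insec r; lp_class s r; route_len r]
    | SecSecond => [:: lp_class s r; insec r; route_len r]
    | SecThird  => [:: lp_class s r; route_len r; insec r]
    end
  else [:: lp_class s r; route_len r].

Definition better (s : V) (r1 r2 : seq V) : bool :=
  lexlt (keys s r1) (keys s r2) || ((keys s r1 == keys s r2) && tb s r1 r2).

Definition select (st : rstate) (s : V) : option (seq V) :=
  let A := avail st s in
  ohead [seq r <- A | all (fun r' => (r' == r) || better s r r') A].

Definition valid_state (st : rstate) : Prop :=
  forall s, s != d -> oapp (is_route cust peer d s) true (st s).

Definition stable (st : rstate) : Prop :=
  forall s, s != d -> select st s = st s.

Definition activate (st : rstate) (a : V) : rstate :=
  fun x => if x == a then select st a else st x.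

Fixpoint run (st0 : rstate) (sched : nat -> V) (t : nat) : rstate :=
  match t with
  | 0 => st0
  | t'.+1 => activate (run st0 sched t') (sched t')
  end.

Definition fair (sched : nat -> V) : Prop :=
  forall (s : V) (t : nat), exists2 t', t <= t' & sched t' = s.

End Routing.

From mathcomp Require Import all_boot zify.
Set Implicit Arguments. Unset Strict Implicit. Unset Printing Implicit Defensive.

(* In all three models an AS ranks its routes by a key vector (insecurity bit,
   LP class, length, in the model's order) and then by tie-break.  The export
   policy guarantees that when an AS extends a neighbour's route by one hop,
   the LP class and the insecurity bit cannot decrease while the length grows,
   so the key vector strictly increases along every route.  Read as a number,
   this vector is a potential that plays the role of distance in Dijkstra's
   algorithm: the stable state is built in layers, layer k fixing the ASes whose
   selected route has potential below k.  A state that agrees with layer k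
   agrees with layer k + 1 after one more selection at each AS, whatever the
   unsettled ASes announce; as the potential is bounded, this forces every
   stable state to equal the last layer and every fair run to reach it. *)

Lemma lexltxx a : lexlt a a = false.
Proof. by elim: a => //= x a ->; rewrite ltnn eqxx. Qed.

Lemma lexlt_asym a b : lexlt a b -> lexlt b a = false.
Proof.
elim: a b => [|x a IH] [|y b] //=.
by case: (ltngtP x y) => //= _; apply: IH.
Qed.

Lemma lexlt_all2_leq a b : all2 leq a b -> a != b -> lexlt a b.
Proof.
elim: a b => [|x a IH] [|y b] //= /andP [le_xy le_ab].
rewrite leq_eqVlt in le_xy; case/orP: le_xy => [/eqP <- | -> //].
by rewrite eqseq_cons eqxx ltnn /=; apply: IH.
Qed.

Fixpoint digval (B : nat) (s : seq nat) : nat :=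
  if s is x :: s' then x * B ^ size s' + digval B s' else 0.

Lemma digval_lt B s : all (fun x => x < B) s -> digval B s < B ^ size s.
Proof.
elim: s => [|x s IH] /=; first by rewrite expn0.
case/andP => lt_xB /IH lt_s; rewrite expnS.
have := leq_mul lt_xB (leqnn (B ^ size s)); nia.
Qed.

Lemma ltn_digit n x y u v : u < n -> v < n ->
  (x * n + u < y * n + v) = (x < y) || (x == y) && (u < v).
Proof.
move=> lt_un lt_vn; case: (ltngtP x y) => [lt_xy|lt_yx|->] /=; last by rewrite ltn_add2l.
- by apply/idP; have := leq_mul lt_xy (leqnn n); nia.
- by apply/negbTE; have := leq_mul lt_yx (leqnn n); nia.
Qed.

Lemma ltn_digval B a b : size a = size b ->
  all (fun x => x < B) a -> all (fun x => x < B) b ->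
  (digval B a < digval B b) = lexlt a b.
Proof.
elim: a b => [|x a IH] [|y b] //= [eq_ab] /andP [_ Ba] /andP [_ Bb].
by rewrite eq_ab ltn_digit ?IH // ?digval_lt // -eq_ab digval_lt.
Qed.

Section Routing.
Variable V : finType.
Variables (cust peer : rel V) (d : V) (S : {set V}) (m : secmodel)
          (tb : V -> rel (seq V)).
Hypothesis wf : wf_as_graph cust peer.
Hypothesis tb_total : forall s, strict_total (tb s).

Local Notation nbr := (nbr cust peer).
Local Notation is_route := (is_route cust peer d).
Local Notation valid := (valid_state cust peer d).
Local Notation offer := (offer cust peer d).
Local Notation avail := (avail cust peer d).
Local Notation exports := (exports cust d).
Local Notation lp_class := (lp_class cust peer).
Local Notation better := (better cust peer S m tb).
Local Notation select := (select cust peer d S m tb).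
Local Notation cur := (cur d).
Local Notation stable := (stable cust peer d S m tb).
Local Notation run := (run cust peer d S m tb).

Lemma better_asym s r1 r2 : better s r1 r2 -> better s r2 r1 = false.
Proof.
case: (tb_total s) => tb_irr tb_trans _.
rewrite /better => /orP [lt12 | /andP [/eqP eq12 tb12]].
  rewrite (lexlt_asym lt12) /=; case: eqP => // eq21.
  by move: lt12; rewrite eq21 lexltxx.
rewrite eq12 lexltxx eqxx /=; apply/negP => tb21.
by move: (tb_irr r1); rewrite (tb_trans _ _ _ tb12 tb21).
Qed.

Definition is_best s (A : seq (seq V)) r :=
  r \in A /\ {in A, forall r', r' = r \/ better s r r'}.

Lemma selectP st s r : select st s = Some r <-> is_best s (avail st s) r.
Proof.
rewrite /select; set A := avail st s.
set good := fun r => all (fun r' => (r' == r) || better s r r') A.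
have goodP x : good x -> {in A, forall r', r' = x \/ better s x r'}.
  by move=> /allP gx r' /gx /orP [/eqP ->|]; [left | right].
split.
  case E: [seq x <- A | good x] => [|x l] //= [<-].
  have : x \in [seq x <- A | good x] by rewrite E mem_head.
  by rewrite mem_filter => /andP [/goodP gx xA].
move=> [rA best].
have gr : good r.
  by apply/allP => r' /best [->|->]; rewrite ?eqxx ?orbT.
have : r \in [seq x <- A | good x] by rewrite mem_filter gr.
case E: [seq x <- A | good x] => [|x l] //= _.
have : x \in [seq x <- A | good x] by rewrite E mem_head.
rewrite mem_filter => /andP [/goodP gx xA].
case: (gx r rA) => [-> //|bxr]; case: (best x xA) => [-> //|brx].
by move: (better_asym bxr); rewrite brx.
Qed.

Lemma availP st s r : r \in avail st s <-> exists n, offer st s n = Some r.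
Proof.
rewrite /avail mem_pmap; split; first by case/mapP => n _ ->; exists n.
by case=> n <-; rewrite map_f ?mem_enum.
Qed.

Lemma offer_SomeP st s n r : offer st s n = Some r ->
  nbr s n /\ exists2 r0, cur st n = Some r0 & [/\ s \notin r0, exports n r0 s & r = s :: r0].
Proof.
rewrite /offer; case: ifP => // nb; case: (cur st n) => // r0.
by case: ifP => // /andP [sr0 ex] [<-]; split => //; exists r0.
Qed.

Lemma eq_offer st st' s n : cur st n = cur st' n -> offer st s n = offer st' s n.
Proof. by rewrite /offer => ->. Qed.

Lemma is_route_cons x n r : is_route x r -> nbr n x -> n \notin r -> is_route n (n :: r).
Proof.
case: r => [|y p] //= /and4P [/eqP -> pa la u] nb ni.
by rewrite eqxx nb pa la /= ni u.
Qed.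

Lemma cur_route st n r : valid st -> cur st n = Some r -> is_route n r.
Proof.
rewrite /cur; case: eqP => [-> _ [<-]|/eqP nd v e]; first by rewrite /= !eqxx.
by move: (v n nd); rewrite e.
Qed.

Lemma avail_route st s r : valid st -> r \in avail st s -> is_route s r.
Proof.
move=> v /availP [n /offer_SomeP [nb [r0 c [ni _ ->]]]].
exact: is_route_cons (cur_route v c) nb ni.
Qed.

Lemma select_route st s r : valid st -> select st s = Some r -> is_route s r.
Proof. by move=> v /selectP [/(avail_route v)]. Qed.

Lemma route_size_le s r : is_route s r -> size r <= #|V|.
Proof.
case: r => [|x p] //= /and4P [_ _ _ u].
by have := max_card (mem (x :: p)); rewrite (card_uniqP (u : uniq (x :: p))).
Qed.

(* At an insecure AS every route contains the AS itself, so its insecurity bit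
   is constantly 1 and [secure_keys] orders its routes exactly as [keys] does. *)
Definition secure_keys s r : seq nat :=
  match m with
  | SecFirst  => [:: insec S r; lp_class s r; route_len r]
  | SecSecond => [:: lp_class s r; insec S r; route_len r]
  | SecThird  => [:: lp_class s r; route_len r; insec S r]
  end.

(* A digit bound: insec <= 1, lp_class <= 3 and route_len < #|V|. *)
Definition base := #|V|.+4.

Definition potential s r := digval base (secure_keys s r).

Lemma secure_keys_digits s r : is_route s r -> all (fun x => x < base) (secure_keys s r).
Proof.
move=> /route_size_le r_le.
have lp_le : lp_class s r <= 3.
  by case: r {r_le} => [|x [|h p]] //=; repeat case: ifP.
have ins_le : insec S r <= 1 by rewrite /insec; case: (~~ _).
have len_lt : route_len r < base by rewrite /route_len /base; lia.
by rewrite /secure_keys /base; case: m => /=; rewrite len_lt; lia.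
Qed.

Lemma potential_bound s r : is_route s r -> potential s r < base ^ 3.
Proof. by move=> /secure_keys_digits /digval_lt; rewrite /potential /secure_keys; case: m. Qed.

Lemma ltn_potential s s' r r' : is_route s r -> is_route s' r' ->
  (potential s r < potential s' r') = lexlt (secure_keys s r) (secure_keys s' r').
Proof.
move=> /secure_keys_digits Br /secure_keys_digits Br'.
by rewrite ltn_digval //; rewrite /secure_keys; case: m.
Qed.

Lemma insec_route s r : is_route s r -> s \notin S -> insec S r = 1.
Proof. by case: r => [|x p] //= /and4P [/eqP -> _ _ _] /negbTE sS; rewrite /insec /= sS. Qed.

Lemma better_of_secure_keys s r1 r2 : is_route s r1 -> is_route s r2 ->
  lexlt (secure_keys s r1) (secure_keys s r2) -> better s r1 r2.
Proof.
move=> rt1 rt2 lt12; rewrite /better /keys; apply/orP; left.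
case: ifP => [_|/negbT sS]; first by move: lt12; rewrite /secure_keys; case: m.
move: lt12; rewrite /secure_keys (insec_route rt1 sS) (insec_route rt2 sS).
by case: m => /=; rewrite ?ltnn ?eqxx /= ?andbF ?orbF.
Qed.

Lemma insec_cons z r : insec S r <= insec S (z :: r).
Proof. by rewrite /insec /=; case: (all (mem S) r); rewrite ?andbT ?andbF. Qed.

Lemma lp_class_extend n y r : n != d -> is_route n r -> nbr y n ->
  exports n r y -> lp_class n r <= lp_class y (y :: r).
Proof.
case: wf => _ _ _ cust_asym peer_cust.
case: r => [|x [|h p]] //= nd.
  by case/and3P => /eqP -> /eqP nd'; rewrite nd' eqxx in nd.
case/andP=> /eqP -> _ _; rewrite /exports (negbTE nd) /= => ex.
case cny: (cust n y).
  by case/orP: ex => [-> //|cyn]; move: (cust_asym n y); rewrite cny cyn.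
case pyn: (peer y n).
  by case/orP: ex => [-> //|cyn]; move: (peer_cust y n); rewrite pyn cyn ?orbT.
by repeat case: ifP.
Qed.

Lemma potential_extend n y r : n != d -> is_route n r -> nbr y n -> y \notin r ->
  exports n r y -> potential n r < potential y (y :: r).
Proof.
move=> nd rt nb yr ex; rewrite ltn_potential //; last exact: is_route_cons rt nb yr.
have lp_le := lp_class_extend nd rt nb ex; have ins_le := insec_cons y r.
have len_lt : route_len r < route_len (y :: r).
  by case: r rt {lp_le ins_le ex yr} => //= x p _; rewrite /route_len /=.
apply: lexlt_all2_leq; rewrite /secure_keys; case: m => /=;
  by rewrite ?lp_le ?ins_le ?(ltnW len_lt) //= !eqseq_cons (ltn_eqF len_lt) ?andbF.
Qed.

Lemma better_of_potential s r1 r2 : is_route s r1 -> is_route s r2 ->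
  potential s r1 < potential s r2 -> better s r1 r2.
Proof. by move=> rt1 rt2; rewrite ltn_potential //; apply: better_of_secure_keys. Qed.

Fixpoint layer k : rstate V :=
  if k is k'.+1 then
    fun y => if layer k' y is Some r then Some r else
      if select (layer k') y is Some r then (if potential y r == k' then Some r else None)
      else None
  else fun _ => None.

Definition agrees k y (o : option (seq V)) :=
  (forall r, layer k y = Some r -> o = Some r) /\
  (layer k y = None -> forall r, o = Some r -> k <= potential y r).

Definition settled k (st : rstate V) := forall y, y != d -> agrees k y (st y).

Lemma layer_succ_Some k y r : layer k y = Some r -> layer k.+1 y = Some r.
Proof. by move=> /= ->. Qed.

Lemma layer_succ_new k y r : layer k y = None -> layer k.+1 y = Some r ->
  select (layer k) y = Some r /\ potential y r = k.
Proof. by move=> /= ->; case: (select _ y) => // r'; case: eqP => // <- [<-]. Qed.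

Lemma layer_succ_None k y : layer k.+1 y = None -> layer k y = None.
Proof. by rewrite /=; case: (layer k y). Qed.

Lemma settled_pred k st : settled k.+1 st -> settled k st.
Proof.
move=> set_st y yd; case: (set_st y yd) => agree_Some agree_None; split.
  by move=> r /layer_succ_Some /agree_Some.
move=> ly r st_y; case E: (layer k.+1 y) => [r'|].
  by move: st_y; rewrite (agree_Some _ E) => -[<-]; have [_ ->] := layer_succ_new ly E.
exact: ltnW (agree_None E r st_y).
Qed.

Lemma settled_layer k : settled k (layer k).
Proof. by move=> y yd; split=> // E r; rewrite E. Qed.

Lemma valid_layer k : valid (layer k).
Proof.
elim: k => [|k IH] s sd //=.
case E: (layer k s) => [r|]; first by move: (IH s sd); rewrite E.
case E2: (select (layer k) s) => [r|] //; case: eqP => // _.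
exact: select_route IH E2.
Qed.

Lemma cur_settled k st n r : settled k st -> cur (layer k) n = Some r -> cur st n = Some r.
Proof. by move=> set_st; rewrite /cur; case: eqP => // /eqP nd; apply: (set_st n nd).1. Qed.

Lemma avail_layer_sub k st y r : settled k st -> r \in avail (layer k) y -> r \in avail st y.
Proof.
move=> set_st /availP [n off]; apply/availP; exists n; rewrite -off; apply: eq_offer.
case E: (cur (layer k) n) => [r0|]; first by rewrite (cur_settled set_st E).
by move: off; rewrite /offer E; case: ifP.
Qed.

Lemma avail_settled k st y r : valid st -> settled k st -> r \in avail st y ->
  r \in avail (layer k) y \/ k < potential y r.
Proof.
move=> v set_st /availP [n off].
case E: (cur (layer k) n) => [r0|].
  left; apply/availP; exists n; rewrite -off; apply: eq_offer.
  by rewrite (cur_settled set_st E).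
right; have nd : n != d by apply/eqP => nd; move: E; rewrite /cur nd eqxx.
have [nb [r1 c [yr1 ex ->]]] := offer_SomeP off.
move: E c; rewrite /cur (negbTE nd) => ln st_n.
have rt : is_route n r1 by move: (v n nd); rewrite st_n.
have := (set_st n nd).2 ln r1 st_n; have := potential_extend nd rt nb yr1 ex; lia.
Qed.

Section LayerStep.
Variable k : nat.
Hypothesis select_layer : forall st, valid st -> settled k st ->
  forall y r, y != d -> layer k y = Some r -> select st y = Some r.
Hypothesis layer_select_ge : forall y r, y != d -> layer k y = None ->
  select (layer k) y = Some r -> k <= potential y r.

Lemma agrees_select_step st y : valid st -> settled k st -> y != d ->
  agrees k.+1 y (select st y).
Proof.
move=> v set_st yd; split=> [r|E r sel_r].
  case E: (layer k y) => [r'|].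
    by rewrite /= E => -[<-]; apply: select_layer v set_st _ _ yd E.
  move=> E'; have [sel_r potential_r] := layer_succ_new E E'.
  have [rA best] := (selectP _ _ _).1 sel_r.
  apply/selectP; split; first exact: avail_layer_sub set_st rA.
  move=> r' r'A; case: (avail_settled v set_st r'A) => [/best //|lt_r']; right.
  apply: better_of_potential; rewrite ?potential_r //.
    exact: avail_route (valid_layer k) rA.
  exact: avail_route v r'A.
have E0 := layer_succ_None E; have [rA best] := (selectP _ _ _).1 sel_r.
case: (avail_settled v set_st rA) => // rAk.
have sel_k : select (layer k) y = Some r.
  by apply/selectP; split=> // r' /(avail_layer_sub set_st) /best.
have := layer_select_ge yd E0 sel_k.
by move: E; rewrite /= E0 sel_k; case: eqP => // ne _; lia.
Qed.

End LayerStep.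

Lemma agrees_select k st y : valid st -> settled k st -> y != d ->
  agrees k.+1 y (select st y).
Proof.
elim: k st y => [|k IH] st y; apply: agrees_select_step => //.
  move=> st' v' set_st' y' r yd' E.
  exact: (IH st' y' v' (settled_pred set_st') yd').1 _ E.
move=> y' r yd' E.
exact: (IH _ y' (valid_layer k.+1) (settled_pred (settled_layer k.+1)) yd').2 E r.
Qed.

Lemma valid_select st : valid st -> valid (select st).
Proof. by move=> v s _; case E: (select st s) => [r|] //=; apply: select_route v E. Qed.

Lemma settled_select k st : valid st -> settled k st -> settled k.+1 (select st).
Proof. by move=> v set_st y; apply: agrees_select. Qed.

Lemma settled_eq_layer st : valid st -> settled (base ^ 3) st ->
  forall y, y != d -> st y = layer (base ^ 3) y.
Proof.
move=> v set_st y yd; case: (set_st y yd) => agree_Some agree_None.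
case E: (layer (base ^ 3) y) => [r|]; first exact: agree_Some.
case st_y: (st y) => [r|] //; have rt : is_route y r by move: (v y yd); rewrite st_y.
by have := agree_None E r st_y; have := potential_bound rt; lia.
Qed.

Lemma layer_stable : stable (layer (base ^ 3)).
Proof.
have v := valid_layer (base ^ 3).
exact: settled_eq_layer (valid_select v)
         (settled_pred (settled_select v (settled_layer _))).
Qed.

Lemma stable_selected st n r : stable st -> n != d -> st n = Some r ->
  exists2 x, nbr n x & exists2 r0, cur st x = Some r0 & n \notin r0 /\ r = n :: r0.
Proof.
move=> stb nd st_n; move: (stb n nd); rewrite st_n.
case/selectP => /availP [x /offer_SomeP [nb [r0 c [nr0 _ ->]]]] _.
by exists x => //; exists r0.
Qed.

Lemma stable_valid st : stable st -> valid st.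
Proof.
move=> stb.
suff cur_route_size : forall k n r, size r < k -> cur st n = Some r -> is_route n r.
  move=> n nd; case E: (st n) => [r|] //=.
  by apply: (cur_route_size (size r).+1); rewrite /cur ?(negbTE nd).
elim=> [n r //|k IH] n r sz; rewrite /cur; case: eqP => [-> [<-] | /eqP nd st_n].
  by rewrite /= !eqxx.
have [x nb [r0 c [nr0 er]]] := stable_selected stb nd st_n.
by rewrite er in sz *; apply: is_route_cons (IH _ _ sz c) nb nr0.
Qed.

Lemma stable_settled k st : stable st -> settled k st.
Proof.
move=> stb; elim: k => [//|k IH] y yd; rewrite -(stb y yd).
exact: agrees_select (stable_valid stb) IH yd.
Qed.

Lemma valid_run st0 sched t : valid st0 -> valid (run st0 sched t).
Proof.
move=> v; elim: t => //= t IH s sd; rewrite /activate.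
case: (s =P sched t) => [<-|_]; [exact: valid_select IH s sd | exact: IH s sd].
Qed.

Lemma agrees_after_activation k st0 sched T y t0 : valid st0 ->
  (forall t, T <= t -> settled k (run st0 sched t)) -> y != d ->
  T <= t0 -> sched t0 = y -> forall t, t0 < t -> agrees k.+1 y (run st0 sched t y).
Proof.
move=> v set_run yd T_t0 act_y; elim=> [//|t IH] lt_t /=; rewrite /activate.
case: (y =P sched t) => [e | ne].
  by rewrite -e; apply: agrees_select (valid_run _ _ v) (set_run _ _) yd; lia.
apply: IH; move: lt_t; rewrite ltnS leq_eqVlt => /orP [/eqP eq_t|//].
by case: ne; rewrite -eq_t act_y.
Qed.

Lemma settled_eventually k st0 sched : valid st0 -> fair sched ->
  exists T, forall t, T <= t -> settled k (run st0 sched t).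
Proof.
move=> v fr; elim: k => [|k [T set_run]]; first by exists 0.
have [act T_act act_y] := fin_all_exists2 (fun y => fr y T).
exists (\max_y act y).+1 => t le_t y yd.
apply: agrees_after_activation v set_run yd (T_act y) (act_y y) _ _.
by apply: leq_trans le_t; rewrite ltnS leq_bigmax.
Qed.

Lemma stable_eq_layer st : stable st ->
  forall s, s != d -> st s = layer (base ^ 3) s.
Proof. by move=> stb; apply: settled_eq_layer (stable_valid stb) (stable_settled _ stb). Qed.

Lemma run_eq_layer st0 sched : valid st0 -> fair sched ->
  exists T, forall t, T <= t -> forall s, s != d -> run st0 sched t s = layer (base ^ 3) s.
Proof.
move=> v fr; have [T set_run] := settled_eventually (base ^ 3) v fr.
by exists T => t le_t; apply: settled_eq_layer (valid_run _ _ v) (set_run t le_t).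
Qed.

End Routing.

Theorem theorem1 :
  forall (V : finType) (cust peer : rel V) (d : V) (S : {set V})
         (m : secmodel) (tb : V -> rel (seq V)),
    wf_as_graph cust peer ->
    no_cp_cycle cust ->
    (forall s, strict_total (tb s)) ->
    exists st : rstate V,
      [/\ valid_state cust peer d st,
          stable cust peer d S m tb st,
          (forall st' : rstate V, stable cust peer d S m tb st' ->
              forall s, s != d -> st' s = st s)
        & (forall (st0 : rstate V) (sched : nat -> V),
              valid_state cust peer d st0 -> fair sched ->
              exists T, forall t, T <= t -> forall s, s != d ->
                run cust peer d S m tb st0 sched t s = st s)].
Proof.
move=> V cust peer d S m tb wf _ tb_total.
exists (layer cust peer d S m tb (base V ^ 3)); split.
- exact: valid_layer.
- exact: layer_stable.
- exact: stable_eq_layer.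
- exact: run_eq_layer.
Qed.
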